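(* Let $k$ be any field, let $d_1,\ldots,d_n$ be positive integers, let $A=k[x_1, \ldots, x_n]/(x_1^{d_1}, \ldots, x_n^{d_n})$ and $t = \sum_{i=1}^n (d_i - 1)$. If $m\ge 0$ is an integer with $\max(d_1, \ldots, d_n)>(t+m)/2$, then for all integers $0\le i \le (t-m)/2$ the map $A_i \to A_{i+m}$ given by $f \mapsto f \cdot (x_1+ \dots + x_n)^m$ is injective.
   Context: $A$ is graded by degree, $A=\bigoplus_{i\ge 0}A_i$, with $A_i$ the image of the homogeneous polynomials of degree $i$. *)

From mathcomp Require Import all_boot all_algebra.
From mathcomp Require Import mpoly.
Set Implicit Arguments. Unset Strict Implicit. Unset Printing Implicit Defensive.
Import GRing.Theory.
Local Open Scope ring_scope.

Definition in_power_ideal (k : fieldType) (n : nat) (d : 'I_n -> nat)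
  (p : {mpoly k[n]}) : Prop :=
  exists g : 'I_n -> {mpoly k[n]}, p = \sum_(j < n) g j * 'X_j ^+ d j.

Definition lin_sum (k : fieldType) (n : nat) : {mpoly k[n]} := \sum_(j < n) 'X_j.

(* A polynomial lies in I = (x_1^{d_1}, ..., x_n^{d_n}) iff its coefficients at the
   standard monomials (all exponents below the d_j) vanish.  Fix j0 with
   d_{j0} = max d_j, so that i + m < d_{j0}.  Suppose some standard monomial occurs
   in h = f - g, and among the monomials of h that are standard except possibly in
   x_{j0}, choose nu with the largest x_{j0}-exponent.  In h * (x_1 + ... + x_n)^m
   the coefficient of nu * x_{j0}^m is then exactly that of nu in h: any other
   contribution would come from a monomial of the same kind with a larger
   x_{j0}-exponent.  Since deg nu = i, the exponent of x_{j0} in nu * x_{j0}^m is at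
   most i + m < d_{j0}, so this monomial is standard and h * (x_1 + ... + x_n)^m is
   not in I. *)
From mathcomp Require Import all_boot all_algebra.
From mathcomp Require Import mpoly.
From mathcomp Require Import zify.
Set Implicit Arguments. Unset Strict Implicit. Unset Printing Implicit Defensive.
Import GRing.Theory.
Local Open Scope ring_scope.

Section PowerIdeal.
Variables (k : fieldType) (n : nat) (d : 'I_n -> nat).
Implicit Types (p h : {mpoly k[n]}) (mu nu : 'X_{1..n}).

Lemma mcoeffMX_if p mu nu :
  (p * 'X_[mu])@_nu = if (mu <= nu)%MM then p@_(nu - mu)%MM else 0.
Proof.
case: ifP => [le_mu_nu | nle_mu_nu].
  by rewrite -{1}(submK le_mu_nu) [(nu - mu + mu)%MM]addmC mcoeffMX.
apply/eqP; rewrite mcoeff_eq0 (perm_mem (msuppMX p mu)).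
by apply/mapP => -[nu' _ nuE]; move: nle_mu_nu; rewrite nuE lem_addr.
Qed.

Definition standard_mnm mu := [forall j, (mu j < d j)%N].

Definition standard_off (j0 : 'I_n) mu := [forall j, (j != j0) ==> (mu j < d j)%N].

Lemma standard_offP j0 mu :
  reflect (forall j, j != j0 -> (mu j < d j)%N) (standard_off j0 mu).
Proof.
apply: (iffP forallP) => H j; first exact/implyP.
exact/implyP/H.
Qed.

Lemma mcoeff_in_power_ideal p mu :
  in_power_ideal d p -> standard_mnm mu -> p@_mu = 0.
Proof.
move=> [g ->] /forallP std_mu; rewrite raddf_sum big1 // => j _.
rewrite /= mpolyXn mcoeffMX_if; case: ifP => // /mnm_lepP /(_ j).
by rewrite mulmnE mnm1E eqxx mul1n; have := std_mu j; lia.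
Qed.

Lemma in_power_ideal0 : in_power_ideal d (0 : {mpoly k[n]}).
Proof. by exists (fun=> 0); rewrite big1 // => j _; rewrite mul0r. Qed.

Lemma in_power_idealD p q :
  in_power_ideal d p -> in_power_ideal d q -> in_power_ideal d (p + q).
Proof.
move=> [g1 ->] [g2 ->]; exists (fun j => g1 j + g2 j).
by rewrite -big_split; apply: eq_bigr => j _; rewrite mulrDl.
Qed.

Lemma in_power_idealZX (c : k) mu j :
  (d j <= mu j)%N -> in_power_ideal d (c *: 'X_[mu]).
Proof.
move=> le_d_mu; exists (fun j' => (j' == j)%:R * (c *: 'X_[mu - U_(j) *+ d j])).
rewrite (bigD1 j) //= big1 ?addr0 => [|j' /negbTE ->]; last by rewrite !mul0r.
rewrite eqxx mul1r -scalerAl mpolyXn -mpolyXD submK //.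
by apply/mnm_lepP => j'; rewrite mulmnE mnm1E; case: eqP => [<-|]; lia.
Qed.

Lemma in_power_idealP p :
  in_power_ideal d p <-> (forall mu, standard_mnm mu -> p@_mu = 0).
Proof.
split=> [Ip mu|coef0]; first exact: mcoeff_in_power_ideal.
rewrite (mpolyE p) big_seq; apply: (big_ind (in_power_ideal d)) => //.
- exact: in_power_ideal0.
- exact: in_power_idealD.
move=> mu; rewrite mcoeff_msupp; have [/existsP[j]|std_mu] := boolP [exists j, d j <= mu j]%N.
  by move=> le_d_mu _; apply: in_power_idealZX le_d_mu.
suff -> : p@_mu = 0 by rewrite eqxx.
apply: coef0; apply/forallP => j; rewrite ltnNge; apply: contra std_mu => le_d_mu.
by apply/existsP; exists j.
Qed.

Section TopExponent.
Variable j0 : 'I_n.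

Definition top_exponent_at a p :=
  forall nu, standard_off j0 nu -> (a < nu j0)%N -> p@_nu = 0.

Lemma top_exponent_at_mul_lin a p :
  top_exponent_at a p -> top_exponent_at a.+1 (p * lin_sum k n).
Proof.
move=> top_p nu /standard_offP std_nu lt_a_nu.
rewrite /lin_sum mulr_sumr raddf_sum big1 // => j _ /=.
rewrite mcoeffMX_if; case: ifP => // _; apply: top_p.
  apply/standard_offP => j' ne_j'; rewrite mnmBE mnm1E.
  by have := std_nu j' ne_j'; case: (j == j'); lia.
by rewrite mnmBE mnm1E; case: (j == j0); lia.
Qed.

Lemma mcoeff_mul_lin a p nu : top_exponent_at a p ->
  standard_off j0 nu -> (a <= nu j0)%N ->
  (p * lin_sum k n)@_(nu + U_(j0))%MM = p@_nu.
Proof.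
move=> top_p /standard_offP std_nu le_a_nu.
rewrite /lin_sum mulr_sumr raddf_sum (bigD1 j0) //= mcoeffMX_if lem_addl addmK.
rewrite big1 ?addr0 // => j ne_j; rewrite mcoeffMX_if; case: ifP => // _.
apply: top_p; last by rewrite mnmBE mnmDE !mnm1E eqxx (negbTE ne_j); lia.
apply/standard_offP => j' ne_j'; rewrite mnmBE mnmDE !mnm1E eq_sym (negbTE ne_j').
by have := std_nu j' ne_j'; case: (j == j'); lia.
Qed.

Lemma top_exponent_at_mul_linX a p r :
  top_exponent_at a p -> top_exponent_at (a + r) (p * lin_sum k n ^+ r).
Proof.
move=> top_p; elim: r => [|r IHr]; first by rewrite addn0 mulr1.
by rewrite exprSr mulrA addnS; apply: top_exponent_at_mul_lin.
Qed.

Lemma mcoeff_mul_linX a p nu r : top_exponent_at a p ->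
  standard_off j0 nu -> (a <= nu j0)%N ->
  (p * lin_sum k n ^+ r)@_(nu + U_(j0) *+ r)%MM = p@_nu.
Proof.
move=> top_p std_nu le_a_nu; elim: r => [|r IHr].
  by rewrite mulr1 mulm0n addm0.
have std_nur : standard_off j0 (nu + U_(j0) *+ r)%MM.
  apply/standard_offP => j ne_j; rewrite mnmDE mulmnE mnm1E eq_sym (negbTE ne_j).
  by rewrite mul0n addn0; move/standard_offP: std_nu; apply.
rewrite mulmSr addmA exprSr mulrA (mcoeff_mul_lin (a := a + r)) ?IHr //.
- exact: top_exponent_at_mul_linX.
- by rewrite mnmDE mulmnE mnm1E eqxx mul1n leq_add2r.
Qed.

Lemma exists_top_exponent p mu : standard_off j0 mu -> p@_mu != 0 ->
  exists2 nu, standard_off j0 nu /\ p@_nu != 0 & top_exponent_at (nu j0) p.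
Proof.
move=> std_mu p_mu.
pose occurs a := has (fun nu => standard_off j0 nu && (nu j0 == a)) (msupp p).
have occurs_mu : exists a, occurs a.
  by exists (mu j0); apply/hasP; exists mu; rewrite ?mcoeff_msupp ?std_mu ?eqxx.
have occurs_bounded a : occurs a -> (a <= msize p)%N.
  case/hasP => nu /msize_mdeg_lt lt_nu_p /andP[_ /eqP <-].
  by move: lt_nu_p; rewrite mdegE (bigD1 j0) //=; lia.
have [a /hasP[nu supp_nu /andP[std_nu /eqP nu_a]] a_max] := ex_maxnP occurs_mu occurs_bounded.
exists nu; first by rewrite -mcoeff_msupp.
move=> nu' std_nu' lt_nu'; apply/eqP; rewrite mcoeff_eq0; apply/negP => supp_nu'.
have /a_max : occurs (nu' j0) by apply/hasP; exists nu'; rewrite ?std_nu' ?eqxx.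
by rewrite -nu_a; lia.
Qed.

Lemma in_power_ideal_mul_linX h m : (msize h + m <= d j0)%N ->
  in_power_ideal d (h * lin_sum k n ^+ m) -> in_power_ideal d h.
Proof.
move=> small_h /in_power_idealP Ihl; apply/in_power_idealP => mu std_mu.
apply/eqP; apply: contraT => h_mu.
have std_off_mu : standard_off j0 mu.
  by apply/standard_offP => j _; move/forallP: std_mu.
have [nu [std_nu h_nu] top_h] := exists_top_exponent std_off_mu h_mu.
have nu_small : (nu j0 + m < d j0)%N.
  have := msize_mdeg_lt (m := nu) (p := h); rewrite mcoeff_msupp h_nu mdegE.
  by rewrite (bigD1 j0) //= => /(_ isT); lia.
have std_num : standard_mnm (nu + U_(j0) *+ m)%MM.
  apply/forallP => j; rewrite mnmDE mulmnE mnm1E.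
  have [<-|ne_j] := eqVneq j0 j; first by rewrite mul1n.
  by rewrite mul0n addn0; move/standard_offP: std_nu; apply; rewrite eq_sym.
by move: h_nu; rewrite -(mcoeff_mul_linX m top_h std_nu) // Ihl ?eqxx.
Qed.

End TopExponent.
End PowerIdeal.

Lemma msize_dhomog (k : fieldType) (n i : nat) (p : {mpoly k[n]}) :
  p \is i.-homog -> (msize p <= i.+1)%N.
Proof.
by move=> hom_p; rewrite msizeE; apply/bigmax_leqP_seq => nu /(dhomog_mf hom_p) /= ->.
Qed.

Unset Implicit Arguments.
Theorem theorem2p5 (k : fieldType) (n : nat) (d : 'I_n -> nat)
    (hd : forall j, (0 < d j)%N) (m : nat)
    (hmax : ((\sum_(j < n) (d j - 1)) + m < 2 * \max_(j < n) d j)%N)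
    (i : nat) (hi : (2 * i + m <= \sum_(j < n) (d j - 1))%N)
    (f g : {mpoly k[n]}) (hf : f \is i.-homog) (hg : g \is i.-homog) :
  in_power_ideal d (f * lin_sum k n ^+ m - g * lin_sum k n ^+ m) ->
  in_power_ideal d (f - g).
Proof.
have n_gt0 : (0 < #|'I_n|)%N.
  rewrite card_ord lt0n; apply/eqP => n0.
  rewrite [X in (_ < 2 * X)%N]big1 in hmax => [|j _]; first by lia.
  by have := ltn_ord j; rewrite {2}n0.
have [j0 max_d] := eq_bigmax d n_gt0.
rewrite -mulrBl; apply: (in_power_ideal_mul_linX (j0 := j0)).
apply: leq_trans (_ : i.+1 + m <= _)%N.
  by rewrite leq_add2r msize_dhomog // rpredB.
by rewrite max_d in hmax; lia.
Qed.
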